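(* Let $k$ be a positive integer and $G$ a finite graph. (1) If $(A,B)$ is a separation of $G$ with $\theta(G[A\cap B])=k$, then $(\widetilde{A},\widetilde{B})$ is a separation of $\widetilde{G}$ with $|\widetilde{A}\cap\widetilde{B}|\le k\cdot\widetilde{\omega}(G)$. (2) If $(X,Y)$ is a separation of $\widetilde{G}$ with $|X\cap Y|=k$, then $(\bigcup X,\bigcup Y)$ is a separation of $G$ with $\theta(G[\bigcup X\cap\bigcup Y])\le k$.
   Context: Two vertices of $G$ are equivalent if they lie in exactly the same maximal cliques of $G$. The clique-quotient graph $\widetilde{G}$ has the equivalence classes as vertices, two distinct classes adjacent iff their representatives are adjacent in $G$. For $A\subseteq V(G)$, $\widetilde{A}$ is the set of equivalence classes containing an element of $A$; for a set $X$ of classes, $\bigcup X$ is the set of all vertices of $G$ lying in a class of $X$. A separation of a graph $H$ is a pair $(A,B)$ of subsets of $V(H)$ with no edge between $A\setminus B$ and $B\setminus A$. $\theta$ is the clique-cover number, and $\widetilde{\omega}(G)$ is the maximum over maximal cliques $K$ of $G$ of the number of equivalence classes meeting $K$. *)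

From mathcomp Require Import all_boot.
Set Implicit Arguments. Unset Strict Implicit. Unset Printing Implicit Defensive.

(* A finite simple graph: vertex type T : finType, adjacency e : rel T
   (assumed symmetric and irreflexive in the theorem). *)
Section Defs.
Variables (T : finType) (e : rel T).

Definition clique (K : {set T}) : bool :=
  [forall x in K, forall y in K, (x != y) ==> e x y].

Definition maxclique (K : {set T}) : bool := maxset clique K.

Definition cequiv (x y : T) : bool :=
  [forall K : {set T}, maxclique K ==> ((x \in K) == (y \in K))].

Definition eqclass (x : T) : {set T} := [set y | cequiv x y].

(* vertex set of the clique-quotient graph: the set of equivalence classes *)
Definition classes : {set {set T}} := [set eqclass x | x : T].

Definition qadj : rel {set T} :=
  fun c d => (c != d) && [exists x in c, exists y in d, e x y].

Definition tilde (A : {set T}) : {set {set T}} := [set eqclass x | x in A].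

Definition bigUc (X : {set {set T}}) : {set T} := \bigcup_(c in X) c.

Definition clique_cover (S : {set T}) (P : {set {set T}}) : bool :=
  [forall K in P, clique K && (K \subset S)] && (S \subset cover P).

Lemma clique_cover_exists (S : {set T}) :
  exists n, [exists P : {set {set T}}, clique_cover S P && (#|P| == n)].
Proof.
exists #|[set [set x] | x in S]|; apply/existsP; exists [set [set x] | x in S].
rewrite eqxx andbT /clique_cover; apply/andP; split.
  apply/forallP => K; apply/implyP => /imsetP [x xS ->]; apply/andP; split.
    apply/forallP => y; apply/implyP; rewrite in_set1 => /eqP->.
    apply/forallP => z; apply/implyP; rewrite in_set1 => /eqP->.
    by rewrite eqxx.
  by rewrite sub1set.
apply/subsetP => x xS; apply/bigcupP; exists [set x]; last by rewrite in_set1.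
by apply/imsetP; exists x.
Qed.

Definition theta (S : {set T}) : nat := ex_minn (clique_cover_exists S).

Definition omegat : nat :=
  \max_(K : {set T} | maxclique K) #|[set c in classes | c :&: K != set0]|.

End Defs.

Definition separation (U : finType) (V : {set U}) (adj : rel U)
  (A B : {set U}) : bool :=
  [&& A \subset V, B \subset V &
      [forall x in A :\: B, forall y in B :\: A, ~~ adj x y]].

(* Equivalent vertices lie in a common maximal
   clique, so every equivalence class is a clique; and if x ~ y is an edge,
   every vertex equivalent to x lies in each maximal clique through the edge,
   so edges between classes are edges between all their representatives.
   Hence separations pass in both directions between G and its quotient.
   For (1), a class meeting both A and B must meet A ∩ B (otherwise two
   adjacent representatives would cross the separation), and each clique of
   a cover of A ∩ B meets at most omegat classes.  For (2), the classes
   partition V(G), so X ∩ Y is itself a clique cover of ⋃X ∩ ⋃Y. *)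
From mathcomp Require Import all_boot.
Set Implicit Arguments. Unset Strict Implicit. Unset Printing Implicit Defensive.

Lemma separationP (U : finType) (V : {set U}) (adj : rel U) (A B : {set U}) :
  reflect [/\ A \subset V, B \subset V &
             forall a b, a \in A -> a \notin B -> b \in B -> b \notin A ->
             ~~ adj a b]
          (separation V adj A B).
Proof.
apply: (iffP and3P) => [[sA sB /forall_inP sep]|[sA sB sep]]; split=> //.
  move=> a b aA aB bB bA.
  have aAB : a \in A :\: B by rewrite inE aA aB.
  have bBA : b \in B :\: A by rewrite inE bB bA.
  exact: (forall_inP (sep a aAB) b bBA).
apply/forall_inP => a /setDP [aA aB]; apply/forall_inP => b /setDP [bB bA].
exact: sep.
Qed.

Lemma leq_card_bigcup (I U : finType) (P : {set I}) (F : I -> {set U}) n :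
  (forall i, i \in P -> #|F i| <= n) -> #|\bigcup_(i in P) F i| <= #|P| * n.
Proof.
move=> leFn; rewrite -sum_nat_const.
elim/big_rec2: _ => [|i m W Pi leWm]; first by rewrite cards0.
by apply: leq_trans (leq_card_setU _ _).1 _; apply: leq_add => //; apply: leFn.
Qed.

Section CliqueQuotient.
Variables (T : finType) (e : rel T).

Lemma cliqueP K x y : clique e K -> x \in K -> y \in K -> x != y -> e x y.
Proof.
by move=> /forall_inP cK xK yK; have /forall_inP/(_ y yK)/implyP := cK x xK.
Qed.

Lemma clique1 x : clique e [set x].
Proof.
apply/forall_inP => y /set1P->; apply/forall_inP => z /set1P->.
by rewrite eqxx.
Qed.

Lemma theta_min S P : clique_cover e S P -> theta e S <= #|P|.
Proof.
rewrite /theta => covP; case: ex_minnP => m _; apply.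
by apply/existsP; exists P; rewrite covP eqxx.
Qed.

Lemma thetaP S : exists2 P, clique_cover e S P & #|P| = theta e S.
Proof.
rewrite /theta; case: ex_minnP => m /existsP [P /andP [covP /eqP cardP]] _.
by exists P.
Qed.

Lemma cequiv_mem x y K : cequiv e x y -> maxclique e K -> (x \in K) = (y \in K).
Proof. by move=> /forallP /(_ K) /implyP xy /xy /eqP. Qed.

Lemma cequiv_refl x : cequiv e x x.
Proof. by apply/forallP => K; rewrite eqxx implybT. Qed.

Lemma cequiv_sym x y : cequiv e x y -> cequiv e y x.
Proof.
move=> xy; apply/forallP => K; apply/implyP => MK.
by rewrite (cequiv_mem xy MK).
Qed.

Lemma cequiv_trans x y z : cequiv e x y -> cequiv e y z -> cequiv e x z.
Proof.
move=> xy yz; apply/forallP => K; apply/implyP => MK.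
by rewrite (cequiv_mem xy MK) (cequiv_mem yz MK).
Qed.

Lemma in_eqclass x y : (y \in eqclass e x) = cequiv e x y.
Proof. by rewrite inE. Qed.

Lemma mem_eqclass x : x \in eqclass e x.
Proof. by rewrite in_eqclass cequiv_refl. Qed.

Lemma eqclass_eq x y : y \in eqclass e x -> eqclass e y = eqclass e x.
Proof.
rewrite in_eqclass => xy; apply/setP => z; rewrite !in_eqclass.
by apply/idP/idP => [/(cequiv_trans xy)|/(cequiv_trans (cequiv_sym xy))].
Qed.

Lemma classes_eqclass c z : c \in classes e -> z \in c -> c = eqclass e z.
Proof. by case/imsetP => x _ -> /eqclass_eq ->. Qed.

Lemma cequiv_adj x y : cequiv e x y -> x != y -> e x y.
Proof.
move=> xy; have [M MM /subsetP sxM] := maxset_exists (clique1 x).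
have xM : x \in M by rewrite sxM ?set11.
have yM : y \in M by rewrite -(cequiv_mem xy MM).
exact: cliqueP (maxsetp MM) xM yM.
Qed.

Lemma classes_clique c : c \in classes e -> clique e c.
Proof.
case/imsetP => z _ ->; apply/forall_inP => u; rewrite in_eqclass => zu.
apply/forall_inP => v; rewrite in_eqclass => zv; apply/implyP.
exact/cequiv_adj/(cequiv_trans (cequiv_sym zu)).
Qed.

Definition classes_meeting (K : {set T}) : {set {set T}} :=
  [set c in classes e | c :&: K != set0].

Lemma card_classes_meeting K : clique e K -> #|classes_meeting K| <= omegat e.
Proof.
move=> cK; have [M MM sKM] := maxset_exists cK.
apply: leq_trans (leq_bigmax_cond (F := fun K => #|classes_meeting K|) M MM).
apply/subset_leq_card/subsetP => c; rewrite !inE => /andP [-> /set0Pn [z]].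
rewrite inE => /andP [zc /(subsetP sKM) zM].
by apply/set0Pn; exists z; rewrite inE zc.
Qed.

Lemma card_tilde_theta S : #|tilde e S| <= theta e S * omegat e.
Proof.
have [P /andP [/forall_inP cliqP /subsetP covP] <-] := thetaP S.
apply: leq_trans (leq_card_bigcup (F := classes_meeting) _); last first.
  by move=> K /cliqP /andP [cK _]; apply: card_classes_meeting.
apply/subset_leq_card/subsetP => _ /imsetP [x xS ->].
have /bigcupP [K KP xK] := covP x xS; apply/bigcupP; exists K => //.
rewrite inE imset_f //=; apply/set0Pn; exists x.
by rewrite inE mem_eqclass.
Qed.

Lemma tildeI_sub A B :
  separation [set: T] e A B ->
  tilde e A :&: tilde e B \subset tilde e (A :&: B).
Proof.
case/separationP => _ _ sep; apply/subsetP => c /setIP [].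
case/imsetP => a aA -> /imsetP [b bB ab].
have [aB|aB] := boolP (a \in B); first by rewrite imset_f // inE aA.
have [bA|bA] := boolP (b \in A); first by rewrite ab imset_f // inE bA.
have a_b : cequiv e a b by rewrite -in_eqclass ab mem_eqclass.
have anb : a != b by apply: contraNneq aB => ->.
by have := sep _ _ aA aB bB bA; rewrite (cequiv_adj a_b anb).
Qed.

Lemma separation_bigUc (X Y : {set {set T}}) :
  separation (classes e) (qadj e) X Y ->
  separation [set: T] e (bigUc X) (bigUc Y).
Proof.
case/separationP => _ _ sep; apply/separationP; split; try exact: subsetT.
move=> x y /bigcupP [c cX xc] xnY /bigcupP [d dY yd] ynX.
have cnY : c \notin Y by apply: contra xnY => cY; apply/bigcupP; exists c.
have dnX : d \notin X by apply: contra ynX => dX; apply/bigcupP; exists d.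
apply: contra (sep _ _ cX cnY dY dnX) => exy; apply/andP; split.
  by apply: contraNneq dnX => <-.
by apply/existsP; exists x; rewrite xc; apply/existsP; exists y; rewrite yd.
Qed.

Lemma bigUcI (X Y : {set {set T}}) :
  X \subset classes e -> Y \subset classes e ->
  bigUc X :&: bigUc Y = bigUc (X :&: Y).
Proof.
move=> /subsetP sX /subsetP sY; apply/setP => z; rewrite in_setI.
apply/andP/bigcupP => [[/bigcupP [c cX zc] /bigcupP [d dY zd]]|].
  exists c => //; rewrite inE cX (classes_eqclass (sX c cX) zc).
  by rewrite -(classes_eqclass (sY d dY) zd).
by case=> c /setIP [cX cY] zc; split; apply/bigcupP; exists c.
Qed.

Lemma theta_bigUc (X : {set {set T}}) :
  X \subset classes e -> theta e (bigUc X) <= #|X|.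
Proof.
move=> /subsetP sX; apply: theta_min; rewrite /clique_cover subxx andbT.
apply/forall_inP => K KX; rewrite classes_clique ?sX //.
exact: bigcup_sup.
Qed.

Hypothesis esym : symmetric e.

Lemma clique2 x y : e x y -> clique e [set x; y].
Proof.
move=> exy; apply/forall_inP => u /set2P Hu; apply/forall_inP => v /set2P Hv.
by apply/implyP; case: Hu Hv => -> [] ->; rewrite ?eqxx // esym.
Qed.

Lemma cequiv_adjl a x y : cequiv e a x -> e x y -> a != y -> e a y.
Proof.
move=> ax exy; have [M MM /subsetP sxyM] := maxset_exists (clique2 exy).
have aM : a \in M by rewrite (cequiv_mem ax MM) sxyM ?set21.
exact: cliqueP (maxsetp MM) aM (sxyM _ (set22 x y)).
Qed.

Lemma cequiv_edge a b x y :
  cequiv e a x -> cequiv e b y -> e x y -> a != b -> e a b.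
Proof.
move=> ax b_y exy ab; rewrite esym.
have [ay|ay] := eqVneq a y; first by rewrite ay cequiv_adj // eq_sym -ay.
have eay : e a y := cequiv_adjl ax exy ay.
by apply: (cequiv_adjl b_y); rewrite 1?esym // eq_sym.
Qed.

Lemma separation_tilde A B :
  separation [set: T] e A B ->
  separation (classes e) (qadj e) (tilde e A) (tilde e B).
Proof.
case/separationP => _ _ sep; apply/separationP; split.
- by apply/subsetP => _ /imsetP [a _ ->]; apply: imset_f.
- by apply/subsetP => _ /imsetP [b _ ->]; apply: imset_f.
move=> _ _ /imsetP [a aA ->] aB /imsetP [b bB ->] bA.
have anB : a \notin B by apply: contra aB => /(imset_f (eqclass e)).
have bnA : b \notin A by apply: contra bA => /(imset_f (eqclass e)).
apply/negP => /andP [_ /existsP [x /andP [ax /existsP [y /andP [b_y exy]]]]].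
move: ax b_y; rewrite !in_eqclass => ax b_y.
have ab : a != b by apply: contraNneq anB => ->.
by move: (sep _ _ aA anB bB bnA); rewrite (cequiv_edge ax b_y exy ab).
Qed.

End CliqueQuotient.

Theorem lemma4p1 (T : finType) (e : rel T) (k : nat) :
  symmetric e -> irreflexive e -> 0 < k ->
  (forall A B : {set T},
     separation [set: T] e A B -> theta e (A :&: B) = k ->
     separation (classes e) (qadj e) (tilde e A) (tilde e B) /\
     #|tilde e A :&: tilde e B| <= k * omegat e) /\
  (forall X Y : {set {set T}},
     separation (classes e) (qadj e) X Y -> #|X :&: Y| = k ->
     separation [set: T] e (bigUc X) (bigUc Y) /\
     theta e (bigUc X :&: bigUc Y) <= k).
Proof.
move=> esym _ _; split=> [A B sepAB <-|X Y sepXY <-]; split.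
- exact: separation_tilde.
- exact: leq_trans (subset_leq_card (tildeI_sub sepAB)) (card_tilde_theta _ _).
- exact: separation_bigUc.
have /separationP [sX sY _] := sepXY.
by rewrite (bigUcI sX sY) theta_bigUc // (subset_trans (subsetIl X Y)).
Qed.
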